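(* Let $p:\widetilde G\to G$ be a two-fold cover and $\tilde g\in\widetilde G$ semisimple. Then (1) $p(\mathcal O(\widetilde G,\tilde g))=\mathcal O(G,p(\tilde g))$; (2) $p^{-1}(\mathcal O(G,p(\tilde g)))=\mathcal O(\widetilde G,\tilde g)\cup\mathcal O(\widetilde G,-\tilde g)$; (3) if $\tilde g$ is strongly regular and relevant, then $\mathcal O(\widetilde G,\tilde g)\neq\mathcal O(\widetilde G,-\tilde g)$.
   Context: $G$ is the group of real points of a connected reductive complex algebraic group, and $p$ has kernel identified with $\{\pm1\}$. $\mathcal O(X,x)$ denotes the $X$-conjugacy class of $x$. $\tilde g$ is strongly regular if $p(\tilde g)$ is semisimple with centralizer in $G(\mathbb C)$ a maximal torus; then $H=\mathrm{Cent}_G(p(\tilde g))$ is a Cartan subgroup. A strongly regular semisimple $\tilde g$ is relevant if $\tilde g\in Z(p^{-1}(H))$ for $H=\mathrm{Cent}_G(p(\tilde g))$. *)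

Set Implicit Arguments.

Record group := Group {
  carrier :> Type;
  gmul : carrier -> carrier -> carrier;
  ginv : carrier -> carrier;
  gone : carrier;
  gmulA : forall x y z, gmul x (gmul y z) = gmul (gmul x y) z;
  gmul1 : forall x, gmul gone x = x;
  gmulV : forall x, gmul (ginv x) x = gone
}.

Arguments gmul {g} _ _.
Arguments ginv {g} _.
Arguments gone {g}.

(** A two-fold cover p : Gt -> G, group-theoretically: a surjective
    homomorphism whose kernel is {1, m} with m <> 1; m plays the role of -1. *)
Record two_fold_cover (Gt G : group) := TwoFoldCover {
  cov :> Gt -> G;
  minus_one : Gt;
  cov_mul : forall x y, cov (gmul x y) = gmul (cov x) (cov y);
  cov_surj : forall y, exists x, cov x = y;
  minus_one_neq : minus_one <> gone;
  cov_minus_one : cov minus_one = gone;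
  cov_ker : forall x, cov x = gone -> x = gone \/ x = minus_one
}.

Definition neg {Gt G : group} (p : two_fold_cover Gt G) (x : Gt) : Gt :=
  gmul (minus_one p) x.

Definition conj_class {X : group} (x : X) : X -> Prop :=
  fun y => exists h : X, y = gmul (gmul h x) (ginv h).

Definition centralizer {G : group} (g : G) : G -> Prop :=
  fun h => gmul h g = gmul g h.

Definition in_center_preimage {Gt G : group} (p : two_fold_cover Gt G)
  (H : G -> Prop) (g : Gt) : Prop :=
  H (p g) /\ forall h : Gt, H (p h) -> gmul h g = gmul g h.

Definition relevant {Gt G : group} (p : two_fold_cover Gt G) (g : Gt) : Prop :=
  in_center_preimage p (centralizer (p g)) g.

(* The kernel {1, -1} of p is a normal subgroup of order two, hence central;
   so the fibre of p through x is {x, -x}, and -1 commutes with conjugation.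
   Parts (1) and (2) follow by lifting conjugating elements through the
   surjection p.  For (3), if -g = h g h^-1 then p h centralizes p g, so by
   relevance h centralizes g, giving -g = g and -1 = 1. *)


Arguments gmulA {_} _ _ _.
Arguments gmul1 {_} _.
Arguments gmulV {_} _.

Definition conjg {G : group} (h x : G) : G := gmul (gmul h x) (ginv h).

Section GroupTheory.

Variable G : group.
Implicit Types x y a e h : G.

Lemma mulgI a x y : gmul a x = gmul a y -> x = y.
Proof.
  intro H.
  rewrite <- (gmul1 x), <- (gmul1 y), <- (gmulV a), <- !gmulA, H.
  reflexivity.
Qed.

Lemma idemg_eq1 e : gmul e e = e -> e = gone.
Proof.
  intro H. transitivity (gmul (ginv e) (gmul e e)).
  - rewrite gmulA, gmulV, gmul1. reflexivity.
  - rewrite H. apply gmulV.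
Qed.

Lemma mulgV x : gmul x (ginv x) = gone.
Proof.
  apply idemg_eq1.
  rewrite <- gmulA, (gmulA (ginv x) x), gmulV, gmul1. reflexivity.
Qed.

Lemma mulg1 x : gmul x gone = x.
Proof. rewrite <- (gmulV x), gmulA, mulgV. apply gmul1. Qed.

Lemma mulIg a x y : gmul x a = gmul y a -> x = y.
Proof.
  intro H.
  rewrite <- (mulg1 x), <- (mulg1 y), <- (mulgV a), !gmulA, H.
  reflexivity.
Qed.

Lemma invg1 : ginv (gone : G) = gone.
Proof. rewrite <- (mulg1 (ginv gone)). apply gmulV. Qed.

Lemma conjg1 h : conjg h gone = gone.
Proof. unfold conjg. rewrite mulg1. apply mulgV. Qed.

Lemma conjgI h x y : conjg h x = conjg h y -> x = y.
Proof. intro H. apply (mulgI h), (mulIg (ginv h)). exact H. Qed.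

Lemma conjg_fixP h x : conjg h x = x <-> gmul h x = gmul x h.
Proof.
  unfold conjg. split; intro H.
  - apply (mulIg (ginv h)). rewrite H, <- gmulA, mulgV, mulg1. reflexivity.
  - rewrite H, <- gmulA, mulgV. apply mulg1.
Qed.

Lemma conj_class_refl x : conj_class x x.
Proof. exists gone. rewrite gmul1, invg1, mulg1. reflexivity. Qed.

End GroupTheory.

Arguments mulgI {G} a {x y}.
Arguments mulIg {G} a {x y}.
Arguments conjgI {G} h {x y}.
Arguments conjg_fixP {G} h x.

Section TwoFoldCover.

Variables Gt G : group.
Variable p : two_fold_cover Gt G.
Implicit Types g h x y : Gt.

Lemma cov1 : p gone = gone.
Proof.
  apply (mulgI (p gone)). rewrite <- cov_mul, gmul1, mulg1. reflexivity.
Qed.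

Lemma covV x : p (ginv x) = ginv (p x).
Proof. apply (mulIg (p x)). rewrite <- cov_mul, !gmulV. apply cov1. Qed.

Lemma covJ h x : p (conjg h x) = conjg (p h) (p x).
Proof. unfold conjg. rewrite !cov_mul, covV. reflexivity. Qed.

Lemma cov_neg x : p (neg p x) = p x.
Proof. unfold neg. rewrite cov_mul, cov_minus_one. apply gmul1. Qed.

Lemma minus_one_central h : gmul h (minus_one p) = gmul (minus_one p) h.
Proof.
  apply conjg_fixP.
  destruct (cov_ker p (conjg h (minus_one p))) as [E | E].
  - rewrite covJ, cov_minus_one. apply conjg1.
  - exfalso. apply (minus_one_neq p), (conjgI h). rewrite E, conjg1. reflexivity.
  - exact E.
Qed.

Lemma conjg_neg h x : conjg h (neg p x) = neg p (conjg h x).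
Proof. unfold neg, conjg. rewrite !gmulA, minus_one_central. reflexivity. Qed.

Lemma cov_fibre x y : p x = p y -> x = y \/ x = neg p y.
Proof.
  intro Hxy.
  destruct (cov_ker p (gmul x (ginv y))) as [E | E].
  - rewrite cov_mul, covV, Hxy. apply mulgV.
  - left. apply (mulIg (ginv y)). rewrite E, mulgV. reflexivity.
  - right. apply (mulIg (ginv y)). unfold neg.
    rewrite E, <- gmulA, mulgV, mulg1. reflexivity.
Qed.

Lemma cov_conj_class_image g (y : G) :
  (exists x, conj_class g x /\ p x = y) <-> conj_class (p g) y.
Proof.
  split.
  - intros [x [[h ->] <-]]. exists (p h). apply covJ.
  - intros [k ->]. destruct (cov_surj p k) as [h <-].
    exists (conjg h g). split.
    + exists h. reflexivity.
    + apply covJ.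
Qed.

Lemma cov_conj_class_preimage g x :
  conj_class (p g) (p x) <-> conj_class g x \/ conj_class (neg p g) x.
Proof.
  split.
  - intros [k Hk]. destruct (cov_surj p k) as [h <-].
    change (p x = conjg (p h) (p g)) in Hk. rewrite <- covJ in Hk.
    destruct (cov_fibre _ _ Hk) as [-> | ->].
    + left. exists h. reflexivity.
    + right. exists h. symmetry. apply conjg_neg.
  - intros [[h ->] | [h ->]]; exists (p h).
    + apply covJ.
    + change (p (conjg h (neg p g)) = conjg (p h) (p g)).
      rewrite covJ, cov_neg. reflexivity.
Qed.

Lemma relevant_not_conj_neg g : relevant p g -> ~ conj_class g (neg p g).
Proof.
  intros [_ Hrel] [h Hh]. change (neg p g = conjg h g) in Hh.
  assert (Hfix : conjg h g = g).
  { apply conjg_fixP, Hrel, conjg_fixP. rewrite <- covJ, <- Hh. apply cov_neg. }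
  apply (minus_one_neq p), (mulIg g).
  fold (neg p g). rewrite Hh, Hfix, gmul1. reflexivity.
Qed.

End TwoFoldCover.

Arguments relevant_not_conj_neg {Gt G p g}.

Theorem mainTheorem13 (Gt G : group) (p : two_fold_cover Gt G)
  (semisimple : G -> Prop) (strongly_regular : G -> Prop) (g : Gt)
  (Hss : semisimple (p g)) :
  (forall y : G, (exists x : Gt, conj_class g x /\ p x = y) <-> conj_class (p g) y)
  /\
  (forall x : Gt, conj_class (p g) (p x) <-> (conj_class g x \/ conj_class (neg p g) x))
  /\
  (strongly_regular (p g) -> relevant p g ->
     ~ (forall x : Gt, conj_class g x <-> conj_class (neg p g) x)).
Proof.
  split; [| split].
  - apply cov_conj_class_image.
  - apply cov_conj_class_preimage.
  - intros _ Hrel Hsame.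
    apply (relevant_not_conj_neg Hrel), Hsame, conj_class_refl.
Qed.
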